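(* Let $(M_I,\triangleright)$ be a prefactor system and let $i\le i'\le i''$ be indices in $I$. (1) If $M_I$ is direct (with embeddings $emb$), then for all $a_i\in M_i$ and $a_{i''}\in M_{i''}$: $a_{i''}\triangleright a_i$ implies $a_{i''}\triangleright emb_{i,i'}(a_i)$. (2) If $M_I$ is inverse (with projections $proj$), then for all $a_{i'}\in M_{i'}$ and $a_{i''}\in M_{i''}$: $a_{i''}\triangleright a_{i'}$ implies $a_{i''}\triangleright proj_{i',i}(a_{i'})$.
   Context: Let $(I,\le)$ be a non-empty directed preordered set (reflexive, transitive, every finite subset has an upper bound). A system $(M_I,\triangleright)$ consists of sets $M_i$ ($i\in I$, regarded as pairwise disjoint) and, for each $i\le i'$, a relation $\triangleright\subseteq M_{i'}\times M_i$ (written $a_{i'}\triangleright a_i$) which is reflexive when $i=i'$. Elements $a_i\in M_i$, $b_j\in M_j$ are consistent, written $a_i\approx b_j$, iff there are $i'\ge i,j$ and $c\in M_{i'}$ with $c\triangleright a_i$ and $c\triangleright b_j$. A prefactor system is a system such that $a_{i'}\approx a_i\iff a_{i'}\triangleright a_i$ for all $i\le i'$, $a_i\in M_i$, $a_{i'}\in M_{i'}$. A family of $\approx$-embeddings consists of maps $emb_{i,i'}:M_i\to M_{i'}$ ($i\le i'$) preserving $\approx$ (i.e. $a\approx b\Rightarrow emb_{i,i'}(a)\approx emb_{i,i'}(b)$) with $emb_{i,i}(a)\approx a$ and $emb_{i',i''}(emb_{i,i'}(a))\approx emb_{i,i''}(a)$. It is coherent if for all $i\le i'\le i''$: $a_{i'}\triangleright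 a_i\Rightarrow emb_{i',i''}(a_{i'})\triangleright a_i$. A family of $\approx$-projections consists of $\approx$-preserving maps $proj_{i',i}:M_{i'}\to M_i$ ($i\le i'$) with $proj_{i,i}(a)\approx a$ and $proj_{i',i}(proj_{i'',i'}(a))\approx proj_{i'',i}(a)$; it is coherent if for all $i\le i'\le i''$: $a_{i''}\triangleright a_i\Rightarrow proj_{i'',i'}(a_{i''})\triangleright a_i$. A prefactor system is direct iff it has coherent $\approx$-embeddings with $a_{i'}\triangleright a_i\iff a_{i'}\approx emb_{i,i'}(a_i)$ for all $i\le i'$; it is inverse iff it has coherent $\approx$-projections with $a_{i'}\triangleright a_i\iff proj_{i',i}(a_{i'})\approx a_i$ for all $i\le i'$. *)

Section Systems.
Variables (I : Type) (le : I -> I -> Prop) (M : I -> Type).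

(* Non-empty directed preordered set. "Every finite subset has an upper bound"
   is written as: I is inhabited and every pair has an upper bound. *)
Definition directed_preorder : Prop :=
  (forall i, le i i) /\
  (forall i j k, le i j -> le j k -> le i k) /\
  inhabited I /\
  (forall i j, exists k, le i k /\ le j k).

(* A relation [tr i i' a' a] meaning a' ▷ a, for a' : M i', a : M i;
   only meaningful when le i i'. *)
Variable tr : forall i i', M i' -> M i -> Prop.

Definition is_system : Prop :=
  directed_preorder /\ (forall i (a : M i), tr i i a a).

Definition consistent {i j} (a : M i) (b : M j) : Prop :=
  exists i', le i i' /\ le j i' /\ exists c : M i', tr i i' c a /\ tr j i' c b.

Definition prefactor_system : Prop :=
  is_system /\
  forall i i', le i i' -> forall (a : M i) (a' : M i'),
    consistent a' a <-> tr i i' a' a.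

Variable emb : forall i i', M i -> M i'.

Definition emb_family : Prop :=
  (forall i i', le i i' -> forall a b : M i,
     consistent a b -> consistent (emb i i' a) (emb i i' b)) /\
  (forall i (a : M i), consistent (emb i i a) a) /\
  (forall i i' i'', le i i' -> le i' i'' -> forall a : M i,
     consistent (emb i' i'' (emb i i' a)) (emb i i'' a)).

Definition emb_coherent : Prop :=
  forall i i' i'', le i i' -> le i' i'' -> forall (a : M i) (a' : M i'),
    tr i i' a' a -> tr i i'' (emb i' i'' a') a.

Definition direct_with : Prop :=
  prefactor_system /\ emb_family /\ emb_coherent /\
  forall i i', le i i' -> forall (a : M i) (a' : M i'),
    tr i i' a' a <-> consistent a' (emb i i' a).

Variable proj : forall i' i, M i' -> M i.

Definition proj_family : Prop :=
  (forall i i', le i i' -> forall a b : M i',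
     consistent a b -> consistent (proj i' i a) (proj i' i b)) /\
  (forall i (a : M i), consistent (proj i i a) a) /\
  (forall i i' i'', le i i' -> le i' i'' -> forall a : M i'',
     consistent (proj i' i (proj i'' i' a)) (proj i'' i a)).

Definition proj_coherent : Prop :=
  forall i i' i'', le i i' -> le i' i'' -> forall (a : M i) (a'' : M i''),
    tr i i'' a'' a -> tr i i' (proj i'' i' a'') a.

Definition inverse_with : Prop :=
  prefactor_system /\ proj_family /\ proj_coherent /\
  forall i i', le i i' -> forall (a : M i) (a' : M i'),
    tr i i' a' a <-> consistent (proj i' i a') a.

End Systems.

Arguments directed_preorder {I} le.
Arguments prefactor_system {I} le {M} tr.
Arguments direct_with {I} le {M} tr emb.
Arguments inverse_with {I} le {M} tr proj.

(* Within a single level, consistency of a prefactor system coincides with [▷],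
   and it is an equivalence relation.  Both parts then follow by rewriting
   [▷] across levels as consistency inside one level, using the composition
   law [emb_{i',i''} ∘ emb_{i,i'} ≈ emb_{i,i''}] (resp. its analogue for
   projections, together with the fact that projections preserve [≈]). *)


Section PrefactorSystem.

Variables (I : Type) (le : I -> I -> Prop) (M : I -> Type)
  (tr : forall i i', M i' -> M i -> Prop).

Local Notation "a ≈ b" := (consistent I le M tr a b) (at level 70).

Lemma consistent_sym i j (a : M i) (b : M j) : a ≈ b -> b ≈ a.
Proof.
  intros [k [Hik [Hjk [c [Hca Hcb]]]]].
  exists k; split; [exact Hjk | split; [exact Hik |]].
  exists c; split; assumption.
Qed.

Hypothesis prefactor : prefactor_system le tr.

Lemma consistent_iff_tr i (a b : M i) : a ≈ b <-> tr i i a b.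
Proof.
  destruct prefactor as [[[Hrefl _] _] Hcons].
  apply Hcons, Hrefl.
Qed.

Lemma consistent_trans i (a b c : M i) : a ≈ b -> b ≈ c -> a ≈ c.
Proof.
  intros Hab Hbc.
  apply consistent_sym, consistent_iff_tr in Hab.
  apply consistent_iff_tr in Hbc.
  destruct prefactor as [[[Hrefl _] _] _].
  exists i; split; [apply Hrefl | split; [apply Hrefl |]].
  exists b; split; assumption.
Qed.

Variables i i' i'' : I.
Hypotheses (Hii' : le i i') (Hi'i'' : le i' i'').

Let Hii'' : le i i''.
Proof.
  destruct prefactor as [[[_ [Htrans _]] _] _].
  exact (Htrans _ _ _ Hii' Hi'i'').
Qed.

Lemma direct_tr_emb (emb : forall j j', M j -> M j') :
  direct_with le tr emb ->
  forall (a : M i) (a'' : M i''), tr i i'' a'' a -> tr i' i'' a'' (emb i i' a).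
Proof.
  intros [_ [[_ [_ Hcomp]] [_ Hdirect]]] a a'' Ha.
  apply Hdirect; [exact Hi'i'' |].
  apply (consistent_trans _ _ (emb i i'' a)).
  - apply Hdirect; [exact Hii'' | exact Ha].
  - apply consistent_sym, Hcomp; assumption.
Qed.

Lemma inverse_tr_proj (proj : forall j' j, M j' -> M j) :
  inverse_with le tr proj ->
  forall (a' : M i') (a'' : M i''), tr i' i'' a'' a' -> tr i i'' a'' (proj i' i a').
Proof.
  intros [_ [[Hpres [_ Hcomp]] [_ Hinverse]]] a' a'' Ha.
  apply Hinverse; [exact Hii'' |].
  apply (consistent_trans _ _ (proj i' i (proj i'' i' a''))).
  - apply consistent_sym, Hcomp; assumption.
  - apply Hpres; [exact Hii' |].
    apply Hinverse; [exact Hi'i'' | exact Ha].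
Qed.

End PrefactorSystem.

Theorem lemma2p5 (I : Type) (le : I -> I -> Prop) (M : I -> Type)
  (tr : forall i i', M i' -> M i -> Prop) :
  prefactor_system le tr ->
  forall i i' i'' : I, le i i' -> le i' i'' ->
  (forall emb : forall j j', M j -> M j',
     direct_with le tr emb ->
     forall (a : M i) (a'' : M i''),
       tr i i'' a'' a -> tr i' i'' a'' (emb i i' a)) /\
  (forall proj : forall j' j, M j' -> M j,
     inverse_with le tr proj ->
     forall (a' : M i') (a'' : M i''),
       tr i' i'' a'' a' -> tr i i'' a'' (proj i' i a')).
Proof.
  intros Hprefactor i i' i'' Hii' Hi'i''.
  split.
  - exact (direct_tr_emb I le M tr Hprefactor i i' i'' Hii' Hi'i'').
  - exact (inverse_tr_proj I le M tr Hprefactor i i' i'' Hii' Hi'i'').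
Qed.
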